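(* Let $m$ be an odd integer $\ge5$ and $l\ge(m+1)/2$. For any $u_1,\ldots,u_m\in V$, $$(\pi\otimes1_V^{\otimes m-4}\otimes\pi)(1_V^{\otimes m}\otimes C^{\otimes l})|u_1u_2\cdots u_m\omega_0^l| = (\pi\otimes1_V^{\otimes m-4}\otimes\pi)\big((2g)^lu_1u_2\cdots u_m+(-1)^l\Phi(u)\big),$$ where $$\Phi(u)=\sum_{\substack{1\le k\le m-1\\ k\text{ odd}}}(-1)^{\frac{k-1}2}\Big(\mathrm{Cont}(u_{m-k+1}\cdots u_{m-1})\,u_m\omega_0^{\frac{k-1}2}u_1u_2\cdots u_{m-k}+\mathrm{Cont}(u_2\cdots u_k)\,u_{k+1}\cdots u_m\omega_0^{\frac{k-1}2}u_1\Big).$$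
   Context: $\mathbb{K}$ is a field of characteristic zero and $V$ a symplectic $\mathbb{K}$-vector space of dimension $2g$ with symplectic basis $a_1,\ldots,a_g,b_1,\ldots,b_g$; $\omega_0=\sum_i(a_i\otimes b_i-b_i\otimes a_i)\in V^{\otimes 2}$. $C\colon V^{\otimes2}\to\mathbb{K}$ is bilinear with $C(a_i\otimes b_j)=\delta_{ij}$, $C(b_i\otimes a_j)=-\delta_{ij}$, $C(a_i\otimes a_j)=C(b_i\otimes b_j)=0$ (so $C(\omega_0)=2g$); $Q=\ker C$ and $\pi\colon V^{\otimes2}\to Q$ is the projection along the decomposition $V^{\otimes2}=Q\oplus\mathbb{K}\omega_0$. Products are taken in the tensor algebra $T(V)$. Here $|\cdot|$ is the cyclic symmetrization $|x_1x_2\cdots x_N|=\sum_{k=0}^{N-1}\nu^k(x_1\cdots x_N)$ for $x_i\in V$, where $\nu(x_1x_2\cdots x_N)=x_2\cdots x_Nx_1$ (this identifies $T(V)/[T(V),T(V)]$ with cyclically invariant tensors). $C^{\otimes l}$ is applied to the last $2l$ tensor factors in consecutive pairs. For $v_1,\ldots,v_{2r}\in V$, $\mathrm{Cont}(v_1v_2\cdots v_{2r})=C(v_1\otimes v_2)C(v_3\otimes v_4)\cdots C(v_{2r-1}\otimes v_{2r})$ (equal to $1$ for $r=0$). *)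

From mathcomp Require Import all_boot all_order all_algebra.
Set Implicit Arguments. Unset Strict Implicit. Unset Printing Implicit Defensive.
Import GRing.Theory.
Local Open Scope ring_scope.

(* Model: V = K^(2g) with basis e_0..e_(2g-1); a_i = e_i, b_i = e_(g+i)
   (i < g).  An element of (the completion of) T(V) is given by its
   coordinates on basis words: a function  seq 'I_(g+g) -> K. *)

Section TensorDefs.
Variables (K : fieldType) (g : nat).

Definition idx := 'I_(g + g).
Definition vec := idx -> K.
Definition word := seq idx.
Definition tens := word -> K.

(* matrix of C: C(e_i (x) e_j); also the coefficients of omega_0 *)
Definition cmat (i j : idx) : K :=
  if ((i < g)%N && (nat_of_ord j == i + g)%N) then 1
  else if ((j < g)%N && (nat_of_ord i == j + g)%N) then -1 else 0.

Definition tone : tens := fun w => (w == [::])%:R.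
Definition tvec (v : vec) : tens := fun w => if w is [:: i] then v i else 0.
Definition tomega : tens := fun w => if w is [:: i; j] then cmat i j else 0.
Definition tadd (x y : tens) : tens := fun w => x w + y w.
Definition tscale (a : K) (x : tens) : tens := fun w => a * x w.
Definition tmul (x y : tens) : tens :=
  fun w => \sum_(k < (size w).+1) x (take k w) * y (drop k w).
Definition tprod (s : seq tens) : tens := foldr tmul tone s.
Definition texp (x : tens) (n : nat) : tens := iter n (tmul x) tone.

(* cyclic symmetrization |x| = sum_{k=0}^{N-1} nu^k x in each degree N,
   nu(x_1 x_2 ... x_N) = x_2 ... x_N x_1 *)
Definition cyc (x : tens) : tens := fun w => \sum_(k < size w) x (rotr k w).

Fixpoint contr (w : word) : K :=
  match w with
  | i :: j :: r => cmat i j * contr r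
  | [::] => 1
  | _ => 0
  end.

(* 1_V^{(x) n} (x) C^{(x) l} : contracts the last 2l tensor factors *)
Definition contractLast (l : nat) (x : tens) : tens :=
  fun w => \sum_(v : (l.*2).-tuple idx) x (w ++ v) * contr v.

Definition Cform (u v : vec) : K := \sum_(i : idx) \sum_(j : idx) u i * v j * cmat i j.

Fixpoint ContV (s : seq vec) : K :=
  match s with
  | u :: v :: r => Cform u v * ContV r
  | [::] => 1
  | _ => 0
  end.

(* matrix of pi : V(x)V -> Q, pi(x) = x - C(x)/(2g) omega_0:
   pi(e_i e_j) = sum_{a,b} pmat a b i j e_a e_b *)
Definition pmat (a b i j : idx) : K :=
  ((a == i) && (b == j))%:R - cmat a b * cmat i j / (g + g)%:R.

(* pi (x) 1^{(x) n-4} (x) pi, applied in each degree n >= 4 *)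
Definition piEnds (x : tens) : tens :=
  fun w => match w with
  | a :: b :: rest =>
      if (2 <= size rest)%N then
        let mid := take (size rest - 2) rest in
        let c := nth a rest (size rest - 2) in
        let d := nth a rest (size rest - 1) in
        \sum_(i : idx) \sum_(j : idx) \sum_(k : idx) \sum_(l : idx)
          pmat a b i j * pmat c d k l * x ([:: i; j] ++ mid ++ [:: k; l])
      else 0
  | _ => 0
  end.

(* u_i u_(i+1) ... u_j (empty product if j < i) *)
Definition uword (u : nat -> vec) (i j : nat) : tens :=
  tprod [seq tvec (u k) | k <- iota i (j.+1 - i)].

Definition contU (u : nat -> vec) (i j : nat) : K :=
  ContV [seq u k | k <- iota i (j.+1 - i)].

Definition Phi (m : nat) (u : nat -> vec) : tens :=
  fun w => \sum_(1 <= k < m | odd k)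
    (-1) ^+ ((k.-1)./2) *
    (contU u (m - k + 1) (m - 1) *
       tprod [:: tvec (u m); texp tomega ((k.-1)./2); uword u 1 (m - k)] w
     + contU u 2 k *
       tprod [:: uword u (k + 1) m; texp tomega ((k.-1)./2); tvec (u 1)] w).

End TensorDefs.

From mathcomp Require Import all_boot all_order all_algebra.
From Stdlib Require Import FunctionalExtensionality.
From mathcomp Require Import zify ring.
Import GRing.Theory.
Local Open Scope ring_scope.
Set Implicit Arguments. Unset Strict Implicit. Unset Printing Implicit Defensive.

(* |X| for X = u_1 ... u_m omega_0^l is the sum of the m + 2l rotations
   of X, so contracting the last 2l slots splits the left-hand side into one term per
   rotation.  The trivial rotation gives (2g)^l u_1 ... u_m because C(omega_0) = 2g.
   The rotations by an odd k < m and by 2l + m - k leave a chain of 2n + 1 contracted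
   omega_0's joining u_1 (resp. u_m) to a free end slot; as the matrix J of C satisfies
   J^2 = -1, the chain contributes (-1)^(n+1) times a Kronecker delta, and the
   contractions among the remaining u's give the Cont factors of Phi.  In every other
   rotation an uncontracted omega_0 occupies the first or the last two slots, and
   pi(omega_0) = 0 kills it. *)

Lemma rotr_catr (T : Type) k (w v : seq T) : (k <= size v)%N ->
  rotr k (w ++ v) = drop (size v - k) v ++ w ++ take (size v - k) v.
Proof.
move=> le_kv; rewrite -{1}(cat_take_drop (size v - k) v) catA.
have {1}<- : size (drop (size v - k) v) = k by rewrite size_drop; lia.
by rewrite rotr_size_cat.
Qed.

Lemma signr_addnMK (R : pzRingType) a b (x : R) :
  (-1) ^+ (a + b) * ((-1) ^+ b * x) = (-1) ^+ a * x.
Proof. by rewrite exprD -mulrA signrMK. Qed.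

Lemma sum_ord_mirror (V : nmodType) m n (F : nat -> V) : (0 < m <= n)%N ->
  \sum_(k < (m + n)%N) F k =
  F 0%N + (\sum_(1 <= k < m) (F k + F (n + (m - k))%N) + \sum_(m <= k < n.+1) F k).
Proof.
move=> /andP[m_gt0 le_mn].
rewrite -(big_mkord xpredT) big_ltn ?addn_gt0 ?m_gt0 //; congr (_ + _).
rewrite big_split /= (@big_cat_nat _ _ _ m); [|lia|lia].
rewrite (@big_cat_nat _ _ _ n.+1 m (m + n)); [|lia|lia].
rewrite /= addrCA addrC; congr (_ + _ + _).
rewrite -(add1n n) big_addn addnK big_nat_rev big_nat_cond [RHS]big_nat_cond.
by apply: eq_bigr => k /andP[/andP[k_ge1 k_lt] _]; congr F; lia.
Qed.

Section Tensors.
Variables (K : fieldType) (g : nat).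
Local Notation I := (idx g).
Local Notation W := (word g).
Local Notation T := (tens K g).
Local Notation cm := (@cmat K g).
Local Notation ct := (@contr K g).

(** * Sums over words *)

Fixpoint wsum (n : nat) (F : W -> K) : K :=
  if n is n'.+1 then \sum_(a : I) wsum n' (fun z => F (a :: z)) else F [::].

Lemma wsumS n F : wsum n.+1 F = \sum_(a : I) wsum n (fun z => F (a :: z)).
Proof. by []. Qed.

Lemma eq_wsum n F G : (forall v, size v = n -> F v = G v) -> wsum n F = wsum n G.
Proof.
elim: n F G => [|n IH] F G eqFG /=; first exact: eqFG.
by apply: eq_bigr => a _; apply: IH => v sz_v; rewrite eqFG //= sz_v.
Qed.

Lemma wsumMl n c F : wsum n (fun v => c * F v) = c * wsum n F.
Proof.
elim: n F => [|n IH] F //=; rewrite mulr_sumr; apply: eq_bigr => a _; exact: IH.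
Qed.

Lemma wsumMr n c F : wsum n (fun v => F v * c) = wsum n F * c.
Proof. by rewrite mulrC -wsumMl; apply: eq_wsum => v _; rewrite mulrC. Qed.

Lemma wsum0 n : wsum n (fun _ => 0) = 0.
Proof. by have := wsumMl n 0 (fun _ => 0); rewrite !mul0r. Qed.

Lemma exchange_wsum n (J : Type) (r : seq J) (P : pred J) (F : J -> W -> K) :
  wsum n (fun v => \sum_(j <- r | P j) F j v) = \sum_(j <- r | P j) wsum n (F j).
Proof.
elim: n F => [|n IH] F //=; rewrite -exchange_big; apply: eq_bigr => a _.
exact: (IH (fun j z => F j (a :: z))).
Qed.

Lemma wsum_cat n1 n2 F :
  wsum (n1 + n2)%N F = wsum n1 (fun z1 => wsum n2 (fun z2 => F (z1 ++ z2))).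
Proof. by elim: n1 F => [|n1 IH] F //=; apply: eq_bigr => a _; rewrite IH. Qed.

Lemma sum_tuple_wsum n (F : W -> K) : \sum_(v : n.-tuple I) F v = wsum n F.
Proof.
elim: n F => [|n IH] F /=.
  by rewrite (big_pred1 [tuple]) // => t; rewrite !inE tuple0 eqxx.
rewrite -(eq_bigr _ (fun a _ => IH (fun z => F (a :: z)))).
rewrite pair_big /= (reindex (fun p : I * n.-tuple I => cons_tuple p.1 p.2)) //=.
exists (fun t : n.+1.-tuple I => (thead t, behead_tuple t)).
  by move=> [a t] _ /=; congr pair; apply: val_inj.
by move=> [[|a s] //= sz_s] _; apply: val_inj.
Qed.

(** * The bilinear form C *)

Lemma sum_mul_delta (F : I -> K) b : \sum_d F d * (d == b)%:R = F b.
Proof.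
rewrite (bigD1 b) //= eqxx mulr1 big1 ?addr0 // => d /negbTE->; exact: mulr0.
Qed.

Definition partner (a : I) : I := insubd a (if (a < g)%N then a + g else a - g)%N.
Definition csign (a : I) : K := if (a < g)%N then 1 else -1.

Lemma val_partner a : val (partner a) = (if (a < g)%N then a + g else a - g)%N.
Proof.
by rewrite val_insubd; have := ltn_ord a; case: (ltnP a g) => ? ?; rewrite ifT //; lia.
Qed.

Lemma cmatE a b : cm a b = if b == partner a then csign a else 0.
Proof.
rewrite /cmat /csign -(inj_eq val_inj) val_partner.
have := ltn_ord a; have := ltn_ord b; case: (ltnP a g) => /= ? ? ?.
- by case: eqP => ?; rewrite ?ifF //; lia.
- by case: ifP => ?; case: eqP => //; lia.
Qed.

Lemma partnerK : involutive partner.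
Proof.
move=> a; apply: val_inj; rewrite !val_partner; have := ltn_ord a.
by case: (ltnP a g) => /= ? ?; case: ifP => ?; lia.
Qed.

Lemma csign_partner a : csign (partner a) = - csign a.
Proof.
rewrite /csign val_partner; have := ltn_ord a.
by case: (ltnP a g) => ? ?; case: ifP => ?; rewrite ?opprK //; lia.
Qed.

Lemma csign_sqr a : csign a * csign a = 1.
Proof. by rewrite /csign; case: ifP; rewrite ?mulrNN mulr1. Qed.

Lemma sum_cmatl a (f : I -> K) : \sum_b cm a b * f b = csign a * f (partner a).
Proof.
rewrite (bigD1 (partner a)) //= cmatE eqxx big1 ?addr0 // => b /negbTE nb.
by rewrite cmatE nb mul0r.
Qed.

Lemma sum_cmat_cmat a c : \sum_b cm a b * cm b c = - (a == c)%:R.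
Proof.
rewrite sum_cmatl cmatE partnerK csign_partner (eq_sym c).
by case: eqP; rewrite ?mulr0 ?oppr0 // mulrN csign_sqr.
Qed.

Lemma sum_cmat_sqr : \sum_a \sum_b cm a b * cm a b = (g + g)%:R.
Proof.
under eq_bigr do rewrite sum_cmatl cmatE eqxx csign_sqr.
by rewrite sumr_const card_ord.
Qed.

Lemma contr_cat p q : ~~ odd (size p) -> ct (p ++ q) = ct p * ct q.
Proof.
move=> /negbTE ev_p; have [n] : exists n, size p = n.*2.
  by exists (size p)./2; rewrite -[LHS]odd_double_half ev_p.
elim: n p {ev_p} => [|n IH] [|a [|b p]] //= => [_|[/IH ->]]; first by rewrite mul1r.
exact: mulrA.
Qed.

Lemma contr_cat_odd p a q :
  odd (size p) -> ct (p ++ a :: q) = ct (p ++ [:: a]) * ct q.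
Proof. by move=> odd_p; rewrite -cat1s catA contr_cat // size_cat addn1 /= odd_p. Qed.

Lemma wsum_contr_chain n a b :
  wsum n.*2.+1 (fun v => ct (a :: v) * ct (v ++ [:: b])) = (-1) ^+ n.+1 * (a == b)%:R.
Proof.
elim: n a => [|n IH] a.
  by rewrite /= expr1 mulN1r -sum_cmat_cmat; apply: eq_bigr => c _; rewrite !mulr1.
rewrite doubleS wsumS.
transitivity (\sum_c cm a c * ((-1) ^+ n.+1 * cm c b)).
  apply: eq_bigr => c _; rewrite wsumS -[cm c b](sum_mul_delta (cm c)) !mulr_sumr.
  apply: eq_bigr => d _; rewrite [(-1) ^+ _ * _]mulrCA -IH -!wsumMl.
  by apply: eq_wsum => v _ /=; ring.
under eq_bigr do rewrite mulrCA.
by rewrite -mulr_sumr sum_cmat_cmat [in RHS]exprS mulrN mulN1r mulNr.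
Qed.

Lemma sum_chain n a (f : I -> K) :
  \sum_b f b * wsum n.*2.+1 (fun v => ct (a :: v) * ct (v ++ [:: b])) = (-1) ^+ n.+1 * f a.
Proof.
under eq_bigr do rewrite wsum_contr_chain mulrCA eq_sym.
by rewrite -mulr_sumr sum_mul_delta.
Qed.

Lemma sum_chain_rev n a (f : I -> K) :
  \sum_b f b * wsum n.*2.+1 (fun v => ct (b :: v) * ct (v ++ [:: a])) = (-1) ^+ n.+1 * f a.
Proof.
under eq_bigr do rewrite wsum_contr_chain mulrCA.
by rewrite -mulr_sumr sum_mul_delta.
Qed.

Lemma wsum_contr_sqr n : wsum n.*2 (fun v => ct v * ct v) = (g + g)%:R ^+ n.
Proof.
elim: n => [|n IH]; first by rewrite /= mulr1.
rewrite doubleS wsumS exprS -{1}sum_cmat_sqr mulr_suml; apply: eq_bigr => a _.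
rewrite wsumS mulr_suml; apply: eq_bigr => b _.
by rewrite -IH -wsumMl; apply: eq_wsum => z _ /=; ring.
Qed.

(** * Homogeneous tensors *)

Definition homog n (x : T) := forall w : W, size w != n -> x w = 0.

Lemma tmul_homogE p (x y : T) w : homog p x ->
  tmul x y w = if (p <= size w)%N then x (take p w) * y (drop p w) else 0.
Proof.
move=> hx; rewrite /tmul; case: leqP => [le_pw|lt_wp].
  rewrite (bigD1 (Ordinal (le_pw : p < (size w).+1)%N)) //= big1 ?addr0 // => k nk.
  rewrite hx ?mul0r // size_takel; last by rewrite -ltnS.
  by apply: contra nk => /eqP k_p; apply/eqP/val_inj.
rewrite big1 // => k _; rewrite hx ?mul0r // size_takel; last by rewrite -ltnS.
by have := ltn_ord k; rewrite neq_ltn; lia.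
Qed.

Lemma tmul_homog_cat (x y : T) p q : homog (size p) x -> tmul x y (p ++ q) = x p * y q.
Proof.
by move=> hx; rewrite (tmul_homogE _ _ hx) size_cat leq_addr take_size_cat ?drop_size_cat.
Qed.

Lemma homog_tmul p q (x y : T) : homog p x -> homog q y -> homog (p + q)%N (tmul x y).
Proof.
move=> hx hy w sz_w; rewrite (tmul_homogE _ _ hx); case: ifP => // le_pw.
by rewrite hy ?mulr0 // size_drop; move: sz_w le_pw; lia.
Qed.

Lemma homog_tvec v : homog 1 (tvec v).
Proof. by move=> [|a [|b w]]. Qed.

Lemma homog_tone : homog 0 (@tone K g).
Proof. by move=> [|a w]. Qed.

Lemma homog_tomega : homog 2 (@tomega K g).
Proof. by move=> [|a [|b [|c w]]]. Qed.

Lemma tmul_tone (x : T) w : tmul x (@tone K g) w = x w.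
Proof.
rewrite /tmul big_ord_recr /= drop_size take_size /tone eqxx mulr1 big1 ?add0r //.
move=> k _; case: eqP => [/(congr1 size)|]; rewrite ?mulr0 // size_drop /= => /eqP.
by rewrite subn_eq0 leqNgt ltn_ord.
Qed.

Lemma texp_tomegaE n w : texp (@tomega K g) n w = if size w == n.*2 then ct w else 0.
Proof.
elim: n w => [|n IH] w; first by case: w.
rewrite /texp iterS -/(texp _ n) (tmul_homogE _ _ homog_tomega).
case: w => [|a [|b w]] //=; rewrite drop0 take0 IH doubleS !eqSS.
by case: ifP; rewrite ?mulr0.
Qed.

Lemma homog_texp n : homog n.*2 (texp (@tomega K g) n).
Proof. by move=> w /negbTE sz_w; rewrite texp_tomegaE sz_w. Qed.

Fixpoint ptens (fs : seq (vec K g)) (z : W) : K :=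
  match fs, z with
  | [::], [::] => 1
  | f :: fs', a :: z' => f a * ptens fs' z'
  | _, _ => 0
  end.

Lemma homog_ptens fs : homog (size fs) (ptens fs).
Proof. by elim: fs => [|f fs IH] [|a z] //= sz_z; rewrite IH ?mulr0. Qed.

Lemma ptens_cat fs1 fs2 z1 z2 : size fs1 = size z1 ->
  ptens (fs1 ++ fs2) (z1 ++ z2) = ptens fs1 z1 * ptens fs2 z2.
Proof.
elim: fs1 z1 => [|f fs IH] [|a z] //= => [_|[/IH ->]]; [exact/esym/mul1r | exact: mulrA].
Qed.

Lemma wsum_ptens_contr fs : wsum (size fs) (fun z => ptens fs z * ct z) = ContV fs.
Proof.
elim: fs {-2}fs (leqnn (size fs)) => [|f fs IH] [|f1 [|f2 r]] //= sz_r; rewrite ?mulr1 //.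
  by rewrite big1 // => a _; rewrite !mulr0.
rewrite /Cform mulr_suml; apply: eq_bigr => a _; rewrite mulr_suml; apply: eq_bigr => b _.
rewrite -(IH r); last by move: sz_r; lia.
by rewrite -wsumMl; apply: eq_wsum => z _ /=; ring.
Qed.

Lemma tprod_tvecE (fs : seq (vec K g)) w : tprod [seq tvec f | f <- fs] w = ptens fs w.
Proof.
elim: fs w => [|f fs IH] [|a w] //=; first exact: (tmul_homogE _ _ (homog_tvec f)).
by rewrite -cat1s (@tmul_homog_cat _ _ [:: a]) ?IH //; exact: homog_tvec.
Qed.

Lemma uwordE (u : nat -> vec K g) i j : uword u i j = ptens [seq u k | k <- iota i (j.+1 - i)].
Proof. by apply: functional_extensionality => w; rewrite -tprod_tvecE -map_comp. Qed.

Lemma homog_uword (u : nat -> vec K g) i j : homog (j.+1 - i)%N (uword u i j).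
Proof. by rewrite uwordE -[X in homog X _](size_iota i) -(size_map u); exact: homog_ptens. Qed.

End Tensors.

(** * The projection pi *)

Section PiEnds.
Variables (K : fieldType) (g : nat).
Hypotheses (char_K : [pchar K] =i pred0) (g_gt0 : (0 < g)%N).
Local Notation W := (word g).
Local Notation T := (tens K g).
Local Notation cm := (@cmat K g).
Local Notation pmat := (@pmat K g).

(* This is [pi omega_0 = 0]. *)
Lemma pmat_omega a b : \sum_i \sum_j pmat a b i j * cm i j = 0.
Proof.
have nz_2g : (g + g)%:R != 0 :> K by rewrite ((pcharf0P K).1 char_K); lia.
transitivity (\sum_i (\sum_j cm i j * (j == b)%:R) * (i == a)%:R
              - cm a b / (g + g)%:R * \sum_i \sum_j cm i j * cm i j).
  rewrite mulr_sumr -sumrB; apply: eq_bigr => i _.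
  rewrite mulr_suml mulr_sumr -sumrB; apply: eq_bigr => j _.
  by rewrite /pmat -mulnb natrM (eq_sym a) (eq_sym b); ring.
by rewrite sum_mul_delta sum_mul_delta sum_cmat_sqr mulfVK ?subrr.
Qed.

Definition pi_null (x : T) := forall w, piEnds x w = 0.

Lemma pi_null_cmat_head (x : T) (y : W -> K) :
  (forall i j z, x [:: i, j & z] = cm i j * y z) -> pi_null x.
Proof.
move=> hx [|a [|b rest]] //=; case: ifP => // _.
move: (take _ rest) (nth a rest (size rest - 2)) (nth a rest (size rest - 1)) => mid c d.
pose G := \sum_k \sum_l pmat c d k l * y (mid ++ [:: k; l]).
transitivity ((\sum_i \sum_j pmat a b i j * cm i j) * G); last by rewrite pmat_omega mul0r.
rewrite mulr_suml; apply: eq_bigr => i _; rewrite mulr_suml; apply: eq_bigr => j _.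
rewrite /G mulr_sumr; apply: eq_bigr => k _; rewrite mulr_sumr; apply: eq_bigr => l _.
by rewrite hx; ring.
Qed.

Lemma pi_null_cmat_tail (x : T) (y : W -> K) :
  (forall z i j, x (z ++ [:: i; j]) = cm i j * y z) -> pi_null x.
Proof.
move=> hx [|a [|b rest]] //=; case: ifP => // _.
move: (take _ rest) (nth a rest (size rest - 2)) (nth a rest (size rest - 1)) => mid c d.
apply: big1 => i _; apply: big1 => j _.
transitivity (pmat a b i j * y [:: i, j & mid] * \sum_k \sum_l pmat c d k l * cm k l).
  rewrite mulr_sumr; apply: eq_bigr => k _; rewrite mulr_sumr; apply: eq_bigr => l _.
  by rewrite -[[:: i, j & mid ++ _]]/([:: i, j & mid] ++ [:: k; l]) hx; ring.
by rewrite pmat_omega mulr0.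
Qed.

Lemma piEnds_add (x y : T) w : piEnds (tadd x y) w = piEnds x w + piEnds y w.
Proof.
case: w => [|a [|b rest]] /=; rewrite ?addr0 //; case: ifP => _; rewrite ?addr0 //.
rewrite -big_split; apply: eq_bigr => i _; rewrite -big_split; apply: eq_bigr => j _.
rewrite -big_split; apply: eq_bigr => k _; rewrite -big_split; apply: eq_bigr => l _.
exact: mulrDr.
Qed.

Lemma pi_null0 : pi_null (fun _ => 0).
Proof.
case=> [|a [|b rest]] //=; case: ifP => // _.
by do 4!(apply: big1 => ? _); rewrite mulr0.
Qed.

Lemma pi_null_add (x y : T) : pi_null x -> pi_null y -> pi_null (tadd x y).
Proof. by move=> nx ny w; rewrite piEnds_add nx ny addr0. Qed.

Lemma piEnds_tadd_null (x y : T) : pi_null y -> piEnds (tadd x y) = piEnds x.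
Proof. by move=> ny; apply: functional_extensionality => w; rewrite piEnds_add ny addr0. Qed.

Lemma pi_null_sum (r : seq nat) (P : pred nat) (F : nat -> T) :
  (forall k, k \in r -> P k -> pi_null (F k)) ->
  pi_null (fun w => \sum_(k <- r | P k) F k w).
Proof.
elim: r => [|k r IH] nullF.
  have -> : (fun w => \sum_(k <- [::] | P k) F k w) = (fun _ => 0).
    by apply: functional_extensionality => v; rewrite big_nil.
  exact: pi_null0.
have -> : (fun w => \sum_(j <- k :: r | P j) F j w) =
    if P k then tadd (F k) (fun w => \sum_(j <- r | P j) F j w)
    else (fun w => \sum_(j <- r | P j) F j w).
  by case: ifP => Pk; apply: functional_extensionality => v; rewrite big_cons Pk.
have {}IH := IH (fun j rj => nullF j (mem_behead (s := k :: r) rj)).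
by case: ifP => // Pk; apply: pi_null_add => //; apply: nullF; rewrite ?mem_head.
Qed.

End PiEnds.

(** * Rotation terms *)

Section Rotations.
Variables (K : fieldType) (g : nat) (u : nat -> vec K g) (m l : nat).
Hypotheses (odd_m : odd m) (m_ge5 : (5 <= m)%N) (m_lt_2l : (m < l.*2)%N).
Local Notation I := (idx g).
Local Notation W := (word g).
Local Notation T := (tens K g).
Local Notation cm := (@cmat K g).
Local Notation ct := (@contr K g).
Local Notation us := [seq u k | k <- iota 1 m].

Lemma uword1mE : uword u 1 m = ptens us.
Proof. by rewrite uwordE subn1. Qed.

Lemma homog_uword1m : homog m (uword u 1 m).
Proof. by rewrite uword1mE -[X in homog X](size_iota 1) -(size_map u); exact: homog_ptens. Qed.

Definition uomega n : T := tmul (uword u 1 m) (texp (@tomega K g) n).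

Lemma homog_uomega n : homog (m + n.*2) (uomega n).
Proof. by apply: homog_tmul; [exact: homog_uword1m | exact: homog_texp]. Qed.

Lemma uomega_cat n p q : size p = m -> size q = n.*2 -> uomega n (p ++ q) = ptens us p * ct q.
Proof.
move=> sz_p sz_q; rewrite /uomega tmul_homog_cat; last by rewrite sz_p; exact: homog_uword1m.
by rewrite uword1mE texp_tomegaE sz_q eqxx.
Qed.

Lemma uomega_omega n p i j q : (m <= size p)%N -> ~~ odd (size p - m) ->
  uomega n.+1 (p ++ [:: i, j & q]) = cm i j * uomega n (p ++ q).
Proof.
move=> le_mp ev_p; rewrite -(cat_take_drop m p) -!catA.
have sz_take : size (take m p) = m by rewrite size_takel.
have ev_drop : ~~ odd (size (drop m p)) by rewrite size_drop.
rewrite /uomega !tmul_homog_cat ?sz_take; try exact: homog_uword1m.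
rewrite !texp_tomegaE !contr_cat // !size_cat /= !addnS doubleS !eqSS.
by case: ifP => _; rewrite ?mulr0 //; ring.
Qed.

Definition rot_term k (w : W) : K := wsum l.*2 (fun v => uomega l (rotr k (w ++ v)) * ct v).

Lemma homog_rot_term k : homog m (rot_term k).
Proof.
move=> w sz_w; transitivity (wsum (K := K) (g := g) l.*2 (fun _ => 0)); last exact: wsum0.
apply: eq_wsum => v sz_v; rewrite homog_uomega ?mul0r // size_rotr size_cat sz_v.
by move: sz_w; lia.
Qed.

Lemma contractLast_cycE w :
  contractLast l (cyc (uomega l)) w = \sum_(k < (m + l.*2)%N) rot_term k w.
Proof.
rewrite /contractLast (sum_tuple_wsum _ (fun v => cyc (uomega l) (w ++ v) * ct v)).
have [sz_w|nsz_w] := eqVneq (size w) m.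
  rewrite /rot_term -exchange_wsum; apply: eq_wsum => v sz_v.
  by rewrite /cyc size_cat sz_w sz_v mulr_suml.
rewrite big1 => [|k _]; last exact: homog_rot_term.
transitivity (wsum (K := K) (g := g) l.*2 (fun _ => 0)); last exact: wsum0.
apply: eq_wsum => v sz_v; rewrite /cyc big1 ?mul0r // => k _.
by rewrite homog_uomega // size_rotr size_cat sz_v; move: nsz_w; lia.
Qed.

Lemma rot_term0 w : rot_term 0 w = (g + g)%:R ^+ l * uword u 1 m w.
Proof.
have [sz_w|nsz_w] := eqVneq (size w) m; last by rewrite homog_rot_term ?homog_uword1m ?mulr0.
rewrite /rot_term (eq_wsum (G := fun v => ptens us w * (ct v * ct v))).
  by rewrite wsumMl wsum_contr_sqr mulrC uword1mE.
by move=> v sz_v; rewrite /rotr subn0 rot_size uomega_cat // mulrA.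
Qed.

Definition phi2 k : T := tprod [:: uword u (k + 1) m; texp (@tomega K g) ((k.-1)./2); tvec (u 1)].

Lemma homog_phi2 j : (j.*2.+1 < m)%N -> homog m (phi2 j.*2.+1).
Proof.
move=> lt_km w sz_w; rewrite /phi2 -pred_Sn doubleK /tprod /=.
have homog_tensors := homog_tmul (homog_uword u (i := (j.*2.+1 + 1)%N) (j := m))
  (homog_tmul (homog_texp K (n := j)) (homog_tmul (homog_tvec (u 1)) (@homog_tone K g))).
by apply: homog_tensors; move: sz_w; lia.
Qed.

Lemma phi2_cat j w1 w3 a : size w1 = (m - j.*2.+1)%N -> size w3 = j.*2 ->
  phi2 j.*2.+1 (w1 ++ w3 ++ [:: a]) =
  ptens [seq u i | i <- iota j.*2.+2 (m - j.*2.+1)] w1 * (ct w3 * u 1 a).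
Proof.
move=> sz1 sz3; rewrite /phi2 -pred_Sn doubleK addn1 /tprod /=.
rewrite tmul_homog_cat; last by rewrite sz1 -subSS; exact: homog_uword.
rewrite tmul_homog_cat ?sz3; last exact: homog_texp.
by rewrite tmul_tone uwordE subSS texp_tomegaE sz3 eqxx.
Qed.

Lemma rot_term_odd_summand j w1 w3 a v1 b v2 : (j.*2.+1 < m)%N ->
  size w1 = (m - j.*2.+1)%N -> size w3 = j.*2 ->
  size v1 = (l - j.+1).*2.+1 -> size v2 = j.*2 ->
  uomega l (rotr j.*2.+1 ((w1 ++ w3 ++ [:: a]) ++ v1 ++ b :: v2)) * ct (v1 ++ b :: v2) =
  ptens [seq u i | i <- iota j.*2.+2 (m - j.*2.+1)] w1 * ct w3 *
  (ptens [seq u i | i <- iota 2 j.*2] v2 * ct v2) *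
  (u 1 b * (ct (a :: v1) * ct (v1 ++ [:: b]))).
Proof.
move=> lt_km sz1 sz3 sz_v1 sz_v2.
have sz_bv2 : size (b :: v2) = j.*2.+1 by rewrite /= sz_v2.
rewrite catA -{1}sz_bv2 rotr_size_cat.
have -> : (b :: v2) ++ (w1 ++ w3 ++ [:: a]) ++ v1 = ((b :: v2) ++ w1) ++ (w3 ++ a :: v1).
  by rewrite -!catA.
rewrite uomega_cat; first last.
- by rewrite size_cat sz3 /= sz_v1; lia.
- by rewrite size_cat sz_bv2 sz1; lia.
have -> : [seq u i | i <- iota 1 m] =
    u 1 :: [seq u i | i <- iota 2 j.*2] ++ [seq u i | i <- iota j.*2.+2 (m - j.*2.+1)].
  rewrite -map_cat -add2n -iotaD; set r := (m - _)%N.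
  by have -> : m = (j.*2 + r).+1 by rewrite /r; lia.
rewrite [ptens _ _]/= ptens_cat ?size_map ?size_iota //.
rewrite contr_cat ?sz3 ?odd_double // contr_cat_odd ?sz_v1 /= ?odd_double //.
ring.
Qed.

Lemma rot_term_odd j w : (j.*2.+1 < m)%N ->
  rot_term j.*2.+1 w = (-1) ^+ l * ((-1) ^+ j * (contU u 2 j.*2.+1 * phi2 j.*2.+1 w)).
Proof.
move=> lt_km; have [sz_w|nsz_w] := eqVneq (size w) m; last first.
  by rewrite homog_rot_term ?homog_phi2 ?mulr0.
have {sz_w} [w1 [w3 [a [-> sz1 sz3]]]] : exists w1 w3 (a : I),
    [/\ w = w1 ++ w3 ++ [:: a], size w1 = (m - j.*2.+1)%N & size w3 = j.*2].
  case/lastP: w sz_w => [|w' a]; first by move=> /= m0; move: m_ge5; rewrite -m0.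
  rewrite size_rcons => sz_w'; exists (take (m - j.*2.+1) w'), (drop (m - j.*2.+1) w'), a.
  rewrite catA cat_take_drop cats1 size_drop size_takel; first by split=> //; lia.
  by rewrite -ltnS sz_w'; lia.
set n := (l - j.+1)%N; rewrite [in RHS](_ : l = (n.+1 + j)%N) ?signr_addnMK; last lia.
set C := ptens [seq u i | i <- iota j.*2.+2 (m - j.*2.+1)] w1 * ct w3.
set us1 := [seq u i | i <- iota 2 j.*2].
rewrite phi2_cat // /rot_term (_ : l.*2 = (n.*2.+1 + j.*2.+1)%N); last lia.
rewrite wsum_cat.
transitivity (wsum n.*2.+1 (fun v1 =>
    \sum_b C * (ContV us1 * (u 1 b * (ct (a :: v1) * ct (v1 ++ [:: b])))))).
  apply: eq_wsum => v1 sz_v1; rewrite wsumS; apply: eq_bigr => b _.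
  rewrite -(wsum_ptens_contr us1) size_map size_iota -wsumMr -wsumMl.
  by apply: eq_wsum => v2 sz_v2; rewrite rot_term_odd_summand // -mulrA.
under eq_wsum => v1 _ do rewrite -!mulr_sumr.
rewrite !wsumMl exchange_wsum; under eq_bigr do rewrite wsumMl.
by rewrite sum_chain /contU !subSS subn0 /C; ring.
Qed.

Definition phi1 k : T := tprod [:: tvec (u m); texp (@tomega K g) ((k.-1)./2); uword u 1 (m - k)].

Lemma homog_phi1 j : (j.*2.+1 < m)%N -> homog m (phi1 j.*2.+1).
Proof.
move=> lt_km w sz_w; rewrite /phi1 -pred_Sn doubleK /tprod /=.
have homog_tensors := homog_tmul (homog_tvec (u m)) (homog_tmul (homog_texp K (n := j))
  (homog_tmul (homog_uword u (i := 1%N) (j := (m - j.*2.+1)%N)) (@homog_tone K g))).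
by apply: homog_tensors; move: sz_w; lia.
Qed.

Lemma phi1_cat j a w1 w2 : size w1 = j.*2 -> size w2 = (m - j.*2.+1)%N ->
  phi1 j.*2.+1 ([:: a] ++ w1 ++ w2) =
  u m a * (ct w1 * ptens [seq u i | i <- iota 1 (m - j.*2.+1)] w2).
Proof.
move=> sz1 sz2; rewrite /phi1 -pred_Sn doubleK /tprod /= -cat1s.
rewrite tmul_homog_cat; last exact: homog_tvec.
rewrite tmul_homog_cat ?sz1; last exact: homog_texp.
by rewrite tmul_tone uwordE subn1 texp_tomegaE sz1 eqxx.
Qed.

Lemma rot_term_shift_summand j a w1 w2 v1 b v2 : (j.*2.+1 < m)%N ->
  size w1 = j.*2 -> size w2 = (m - j.*2.+1)%N ->
  size v1 = j.*2 -> size v2 = (l - j.+1).*2.+1 ->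
  uomega l (rotr (l.*2 + (m - j.*2.+1)) (([:: a] ++ w1 ++ w2) ++ v1 ++ b :: v2)) *
    ct (v1 ++ b :: v2) =
  ptens [seq u i | i <- iota 1 (m - j.*2.+1)] w2 * ct w1 *
  (ptens [seq u i | i <- iota (m - j.*2.+1).+1 j.*2] v1 * ct v1) *
  (u m b * (ct (b :: v2) * ct (v2 ++ [:: a]))).
Proof.
move=> lt_km sz1 sz2 sz_v1 sz_v2.
have sz_rot : size (w2 ++ v1 ++ b :: v2) = (l.*2 + (m - j.*2.+1))%N.
  by rewrite !size_cat sz2 sz_v1 /= sz_v2; lia.
have -> : ([:: a] ++ w1 ++ w2) ++ v1 ++ b :: v2 = ([:: a] ++ w1) ++ (w2 ++ v1 ++ b :: v2).
  by rewrite -!catA.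
rewrite -sz_rot rotr_size_cat.
have -> : (w2 ++ v1 ++ b :: v2) ++ [:: a] ++ w1 = (w2 ++ v1 ++ [:: b]) ++ (v2 ++ a :: w1).
  by rewrite -!catA.
rewrite uomega_cat; first last.
- by rewrite size_cat sz_v2 /= sz1; lia.
- by rewrite !size_cat sz2 sz_v1 /=; lia.
have -> : [seq u i | i <- iota 1 m] = [seq u i | i <- iota 1 (m - j.*2.+1)] ++
    [seq u i | i <- iota (m - j.*2.+1).+1 j.*2] ++ [:: u m].
  set r := (m - _)%N; have -> : m = (r + j.*2).+1 by rewrite /r; lia.
  by rewrite -[(r + j.*2).+1]addn1 !iotaD !map_cat -catA !add1n addn1.
rewrite !ptens_cat ?size_map ?size_iota //.
rewrite contr_cat_odd; last by rewrite sz_v2 /= odd_double.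
rewrite [ct (v1 ++ _)]contr_cat /=; last by rewrite sz_v1 odd_double.
ring.
Qed.

Lemma rot_term_shift j w : (j.*2.+1 < m)%N ->
  rot_term (l.*2 + (m - j.*2.+1)) w =
  (-1) ^+ l * ((-1) ^+ j * (contU u (m - j.*2.+1 + 1) (m - 1) * phi1 j.*2.+1 w)).
Proof.
move=> lt_km; have [sz_w|nsz_w] := eqVneq (size w) m; last first.
  by rewrite homog_rot_term ?homog_phi1 ?mulr0.
have {sz_w} [a [w1 [w2 [-> sz1 sz2]]]] : exists (a : I) w1 w2,
    [/\ w = [:: a] ++ w1 ++ w2, size w1 = j.*2 & size w2 = (m - j.*2.+1)%N].
  case: w sz_w => [|a w'] /=; first by move=> m0; move: m_ge5; rewrite -m0.
  move=> sz_w'; exists a, (take j.*2 w'), (drop j.*2 w').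
  by rewrite cat_take_drop size_drop size_takel; [split=> //; lia | lia].
set n := (l - j.+1)%N; rewrite [in RHS](_ : l = (n.+1 + j)%N) ?signr_addnMK; last lia.
set C := ptens [seq u i | i <- iota 1 (m - j.*2.+1)] w2 * ct w1.
set us2 := [seq u i | i <- iota (m - j.*2.+1).+1 j.*2].
rewrite phi1_cat // /rot_term {1}(_ : l.*2 = (j.*2 + (n.*2.+1).+1)%N); last lia.
rewrite wsum_cat.
transitivity (wsum j.*2 (fun v1 => ptens us2 v1 * ct v1 *
    (C * \sum_b u m b * wsum n.*2.+1 (fun v2 => ct (b :: v2) * ct (v2 ++ [:: a]))))).
  apply: eq_wsum => v1 sz_v1; rewrite wsumS !mulr_sumr; apply: eq_bigr => b _.
  rewrite -!wsumMl; apply: eq_wsum => v2 sz_v2.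
  by rewrite rot_term_shift_summand // /C /us2; ring.
rewrite /contU addn1 (_ : ((m - 1).+1 - (m - j.*2.+1).+1 = j.*2)%N); last lia.
rewrite -(wsum_ptens_contr us2) size_map size_iota -wsumMr -wsumMl.
by apply: eq_wsum => v1 _; rewrite sum_chain_rev /C; ring.
Qed.

Lemma rot_term_odd_pair k w : odd k -> (k < m)%N ->
  rot_term k w + rot_term (l.*2 + (m - k)) w =
  (-1) ^+ l * ((-1) ^+ ((k.-1)./2) *
    (contU u (m - k + 1) (m - 1) * phi1 k w + contU u 2 k * phi2 k w)).
Proof.
move=> odd_k lt_km; rewrite -(odd_double_half k) odd_k add1n in lt_km *.
by rewrite rot_term_odd // rot_term_shift // -pred_Sn doubleK; ring.
Qed.

Definition omega_cofactor (P Q : W -> W -> W) (z : W) : K :=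
  if size z == (m - 2)%N then wsum l.*2 (fun v => uomega l.-1 (P z v ++ Q z v) * ct v) else 0.

Lemma rot_term_omega k (P Q : W -> W -> W) x z i j : size x = (size z).+2 ->
  (forall v, size z = (m - 2)%N -> size v = l.*2 ->
     [/\ rotr k (x ++ v) = P z v ++ [:: i, j & Q z v],
         (m <= size (P z v))%N & ~~ odd (size (P z v) - m)]) ->
  rot_term k x = cm i j * omega_cofactor P Q z.
Proof.
move=> sz_x rot_x; rewrite /omega_cofactor; case: eqP => [sz_z|nsz_z].
  rewrite /rot_term -wsumMl; apply: eq_wsum => v sz_v.
  have [-> le_mP ev_P] := rot_x v sz_z sz_v.
  by rewrite -[in uomega l](@prednK l) ?uomega_omega ?mulrA //; lia.
by rewrite mulr0 homog_rot_term // sz_x; move: nsz_z; lia.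
Qed.

Definition vanishing_terms : T := tadd
  (fun w => \sum_(1 <= k < m | ~~ odd k) (rot_term k w + rot_term (l.*2 + (m - k)) w))
  (fun w => \sum_(m <= k < l.*2.+1) rot_term k w).

Lemma contractLast_cyc_decomp :
  contractLast l (cyc (uomega l)) =
  tadd (tadd (tscale ((g + g)%:R ^+ l) (uword u 1 m)) (tscale ((-1) ^+ l) (Phi m u)))
       vanishing_terms.
Proof.
apply: functional_extensionality => w; rewrite /tadd /tscale.
rewrite contractLast_cycE (sum_ord_mirror (fun k => rot_term k w)) ?rot_term0; last first.
  by apply/andP; split; lia.
rewrite /Phi /vanishing_terms /tadd -!addrA; congr (_ + _).
rewrite (bigID odd) /= -addrA; congr (_ + _).
rewrite mulr_sumr big_nat_cond [RHS]big_nat_cond.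
apply: eq_bigr => k /andP[/andP[_ lt_km] odd_k].
exact: rot_term_odd_pair.
Qed.

Section Vanishing.
Hypotheses (char_K : [pchar K] =i pred0) (g_gt0 : (0 < g)%N).

Lemma rot_term_null_tail k (P Q : W -> W -> W) :
  (forall z i j v, size z = (m - 2)%N -> size v = l.*2 ->
     [/\ rotr k ((z ++ [:: i; j]) ++ v) = P z v ++ [:: i, j & Q z v],
         (m <= size (P z v))%N & ~~ odd (size (P z v) - m)]) ->
  pi_null (rot_term k).
Proof.
move=> rot_z; apply: (pi_null_cmat_tail char_K g_gt0 (y := omega_cofactor P Q)) => z i j.
by apply: rot_term_omega => [|v]; [rewrite size_cat addn2 | exact: rot_z].
Qed.

Lemma rot_term_null_head k (P Q : W -> W -> W) :
  (forall z i j v, size z = (m - 2)%N -> size v = l.*2 ->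
     [/\ rotr k ([:: i, j & z] ++ v) = P z v ++ [:: i, j & Q z v],
         (m <= size (P z v))%N & ~~ odd (size (P z v) - m)]) ->
  pi_null (rot_term k).
Proof.
move=> rot_z; apply: (pi_null_cmat_head char_K g_gt0 (y := omega_cofactor P Q)) => i j z.
by apply: rot_term_omega => [|v]; [| exact: rot_z].
Qed.

Lemma rot_term_even_null k : ~~ odd k -> (0 < k <= l.*2)%N -> pi_null (rot_term k).
Proof.
move=> ev_k /andP[k_gt0 le_k2l].
apply: (rot_term_null_tail (P := fun z v => drop (l.*2 - k) v ++ z)
                        (Q := fun _ v => take (l.*2 - k) v)) => z i j v sz_z sz_v.
rewrite rotr_catr sz_v // -!catA size_cat size_drop sz_v sz_z.
by split=> //; lia.
Qed.

Lemma rot_term_odd_null k : odd k -> (m <= k <= l.*2)%N -> pi_null (rot_term k).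
Proof.
move=> odd_k /andP[le_mk le_k2l].
apply: (rot_term_null_head (P := fun _ v => drop (l.*2 - k) v)
                        (Q := fun z v => z ++ take (l.*2 - k) v)) => z i j v sz_z sz_v.
rewrite rotr_catr sz_v // size_drop sz_v.
by split=> //; lia.
Qed.

Lemma rot_term_shift_null s : odd s -> (s < m)%N -> pi_null (rot_term (l.*2 + s)).
Proof.
move=> odd_s lt_sm.
apply: (rot_term_null_head (P := fun z v => drop (m - 2 - s) z ++ v)
                        (Q := fun z _ => take (m - 2 - s) z)) => z i j v sz_z sz_v.
have sz_drop : size (drop (m - 2 - s) z ++ v) = (l.*2 + s)%N.
  by rewrite size_cat size_drop sz_v sz_z; lia.
have -> : [:: i, j & z] ++ v = [:: i, j & take (m - 2 - s) z] ++ (drop (m - 2 - s) z ++ v).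
  by rewrite /= catA cat_take_drop.
by rewrite -{1}sz_drop rotr_size_cat sz_drop; split=> //; lia.
Qed.

Lemma pi_null_vanishing_terms : pi_null vanishing_terms.
Proof.
apply: pi_null_add; apply: pi_null_sum => k; rewrite mem_index_iota => /andP[k_ge1 k_lt].
  move=> ev_k; apply: pi_null_add; first by apply: rot_term_even_null; lia.
  by apply: rot_term_shift_null; lia.
by move=> _; case: (boolP (odd k)) => [odd_k|ev_k];
  [apply: rot_term_odd_null | apply: rot_term_even_null]; lia.
Qed.

End Vanishing.
End Rotations.

Theorem lemma5p3 (K : fieldType) (hK : [pchar K] =i pred0) (g : nat)
  (hg : (0 < g)%N) (m l : nat) (hmodd : odd m) (hm : (5 <= m)%N)
  (hl : (m.+1 <= l.*2)%N) (u : nat -> vec K g) :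
  piEnds (contractLast l (cyc (tmul (uword u 1 m) (texp (@tomega K g) l)))) =
  piEnds (tadd (tscale ((g + g)%:R ^+ l) (uword u 1 m))
               (tscale ((-1) ^+ l) (Phi m u))).
Proof.
rewrite (contractLast_cyc_decomp u hmodd hm hl) piEnds_tadd_null //.
exact: pi_null_vanishing_terms.
Qed.
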